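(* Let $\nu\ge0$, $\epsilon\in\{0,1\}$, $\zeta$ real with $K:=1+\zeta\nu^2\neq0$, $s:=\zeta+\sqrt\nu$, and write $E=\exp(3\delta/(2K))$. Consider the system for functions $U,m,\gamma,\delta,\beta$ of $(X,T)$: $$m=\nu^2U_{XX}-\epsilon U,\qquad m_T=-m_XU-2mU_X+\tfrac23(1-\nu^{5/2})U_{XXX},$$ $$\gamma_X=-\frac{3}{4K}\gamma^2+m+\tfrac13\epsilon s,\qquad \gamma_T=\Big[\tfrac23K U_X-\tfrac23 s\gamma-\gamma U\Big]_X,$$ $$\delta_X=\gamma,\qquad \delta_T=\tfrac23KU_X-\tfrac23s\gamma-U\gamma,$$ $$\beta_X=\big[\nu^2m+\tfrac13\epsilon(\nu^{5/2}-1)\big]E,$$ $$\beta_T=\Big[-\tfrac13(\nu^{5/2}-1)(2m+\epsilon U)-\tfrac12\gamma^2+\tfrac29\epsilon(2\zeta+\zeta^2\nu^2-\nu^3+2\sqrt\nu)-\nu^2Um\Big]E,$$ whose equations are mutually compatible. Define $$Q_U=\gamma E,\quad Q_m=\Big[\nu^2m_X+\frac{3\nu^2\gamma}{K}m+\gamma\epsilon\frac{\nu^{5/2}-1}{K}\Big]E,\quad Q_\gamma=\big[\nu^2m+\tfrac13\epsilon(\nu^{5/2}-1)\big]E,$$ $$Q_\delta=\beta,\qquad Q_\beta=\nu^2\big[\nu^2m+\tfrac13\epsilon(\nu^{5/2}-1)\big]E^2+\frac{3}{4K}\beta^2 .$$ Then the evolutionary vector field $W=Q_U\partial_U+Q_m\partial_m+Q_\gamma\partial_\gamma+Q_\delta\partial_\delta+Q_\beta\partial_\beta$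 is a symmetry of the system: for every smooth solution $(U,m,\gamma,\delta,\beta)$, the deformed tuple $(U+\tau Q_U,\,m+\tau Q_m,\,\gamma+\tau Q_\gamma,\,\delta+\tau Q_\delta,\,\beta+\tau Q_\beta)$ (with the $Q$'s evaluated on the solution) satisfies all equations of the system up to terms of order $\tau^2$. *)

From Stdlib Require Import Reals List.
From Coquelicot Require Import Coquelicot.
Open Scope R_scope.

Definition dX (f : R -> R -> R) : R -> R -> R :=
  fun x t => Derive (fun y => f y t) x.
Definition dT (f : R -> R -> R) : R -> R -> R :=
  fun x t => Derive (fun s => f x s) t.

Fixpoint pd (w : list bool) (f : R -> R -> R) : R -> R -> R :=
  match w with
  | nil => f
  | true :: w' => dX (pd w' f)
  | false :: w' => dT (pd w' f)
  end.

Definition smooth2 (f : R -> R -> R) : Prop :=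
  forall w : list bool,
    (forall x t, ex_derive (fun y => pd w f y t) x /\
                 ex_derive (fun s => pd w f x s) t) /\
    (forall p : R * R, continuous (fun q : R * R => pd w f (fst q) (snd q)) p).

Section Sys.
Variables nu eps zeta : R.

Definition Kc : R := 1 + zeta * nu ^ 2.
Definition sc : R := zeta + sqrt nu.
(* nu^(5/2) for nu >= 0 *)
Definition nu52 : R := nu ^ 2 * sqrt nu.

Definition Ef (d : R -> R -> R) : R -> R -> R :=
  fun x t => exp (3 * d x t / (2 * Kc)).

Inductive eqn := Em | EmT | EgX | EgT | EdX | EdT | EbX | EbT.

Definition residual (e : eqn) (U m g d b : R -> R -> R) : R -> R -> R :=
  fun x t =>
  match e with
  | Em => m x t - (nu ^ 2 * dX (dX U) x t - eps * U x t)
  | EmT => dT m x t - (- dX m x t * U x t - 2 * m x t * dX U x t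
                       + 2 / 3 * (1 - nu52) * dX (dX (dX U)) x t)
  | EgX => dX g x t - (- (3 / (4 * Kc)) * (g x t) ^ 2 + m x t + 1 / 3 * eps * sc)
  | EgT => dT g x t -
           dX (fun y s => 2 / 3 * Kc * dX U y s - 2 / 3 * sc * g y s - g y s * U y s) x t
  | EdX => dX d x t - g x t
  | EdT => dT d x t - (2 / 3 * Kc * dX U x t - 2 / 3 * sc * g x t - U x t * g x t)
  | EbX => dX b x t - (nu ^ 2 * m x t + 1 / 3 * eps * (nu52 - 1)) * Ef d x t
  | EbT => dT b x t -
           (- 1 / 3 * (nu52 - 1) * (2 * m x t + eps * U x t) - 1 / 2 * (g x t) ^ 2
            + 2 / 9 * eps * (2 * zeta + zeta ^ 2 * nu ^ 2 - nu ^ 3 + 2 * sqrt nu)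
            - nu ^ 2 * U x t * m x t) * Ef d x t
  end.

Definition is_solution (U m g d b : R -> R -> R) : Prop :=
  forall e x t, residual e U m g d b x t = 0.

Definition QU (U m g d b : R -> R -> R) : R -> R -> R :=
  fun x t => g x t * Ef d x t.
Definition Qm (U m g d b : R -> R -> R) : R -> R -> R :=
  fun x t => (nu ^ 2 * dX m x t + 3 * nu ^ 2 * g x t / Kc * m x t
              + g x t * eps * (nu52 - 1) / Kc) * Ef d x t.
Definition Qg (U m g d b : R -> R -> R) : R -> R -> R :=
  fun x t => (nu ^ 2 * m x t + 1 / 3 * eps * (nu52 - 1)) * Ef d x t.
Definition Qd (U m g d b : R -> R -> R) : R -> R -> R := b.
Definition Qb (U m g d b : R -> R -> R) : R -> R -> R :=
  fun x t => nu ^ 2 * (nu ^ 2 * m x t + 1 / 3 * eps * (nu52 - 1)) * (Ef d x t) ^ 2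
             + 3 / (4 * Kc) * (b x t) ^ 2.

Definition deform (tau : R) (f q : R -> R -> R) : R -> R -> R :=
  fun x t => f x t + tau * q x t.

End Sys.

From Stdlib Require Import Reals Lra List FunctionalExtensionality.
From Coquelicot Require Import Coquelicot.
Open Scope R_scope.

(* Every deformed residual is a polynomial in [tau], except in the two beta-equations,
   where deforming [delta] by [tau * beta] multiplies [E] by [exp (3 tau beta / (2 K))].
   The [tau ^ 0] coefficient is the residual of the solution itself, and the [tau ^ 1]
   coefficient is the linearisation of the system in the direction W, which vanishes once
   every partial derivative of the characteristics is rewritten through the system
   ([delta_X = gamma], [m_X] and [m_XX] from [m = nu^2 U_XX - eps U], [m_XT] by Schwarz).
   So the polynomial residuals are [tau ^ 2] times their value at [tau = 1], and the
   beta-residuals differ from such a polynomial by a quadratic in [tau] times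
   [exp (tau k) - 1 - tau k] = O(tau ^ 2). *)

Lemma smooth2_ex_derive_X (f : R -> R -> R) (w : list bool) x t :
  smooth2 f -> ex_derive (fun y => pd w f y t) x.
Proof. intros Hf. exact (proj1 (proj1 (Hf w) x t)). Qed.

Lemma smooth2_ex_derive_T (f : R -> R -> R) (w : list bool) x t :
  smooth2 f -> ex_derive (fun s => pd w f x s) t.
Proof. intros Hf. exact (proj2 (proj1 (Hf w) x t)). Qed.

Lemma smooth2_dXdT (f : R -> R -> R) x t : smooth2 f -> dX (dT f) x t = dT (dX f) x t.
Proof.
intros Hf. apply (Schwarz f x t).
- exists (mkposreal 1 Rlt_0_1). intros u v _ _.
  repeat split; [exact (smooth2_ex_derive_X f nil u v Hf)
                | exact (smooth2_ex_derive_T f nil u v Hf)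
                | exact (smooth2_ex_derive_X f (false :: nil) u v Hf)
                | exact (smooth2_ex_derive_T f (true :: nil) u v Hf)].
- apply continuity_2d_pt_filterlim. exact (proj2 (Hf (true :: false :: nil)) (x, t)).
- apply continuity_2d_pt_filterlim. exact (proj2 (Hf (false :: true :: nil)) (x, t)).
Qed.

Lemma dX_ext (f : R -> R -> R) (h : R -> R) x t :
  (forall y, f y t = h y) -> dX f x t = Derive h x.
Proof. intros Hfh. exact (Derive_ext _ _ x Hfh). Qed.

Lemma dX_deform tau (f q : R -> R -> R) :
  (forall x t, ex_derive (fun y => f y t) x) -> (forall x t, ex_derive (fun y => q y t) x) ->
  dX (deform tau f q) = deform tau (dX f) (dX q).
Proof.
intros Hf Hq. do 2 (apply functional_extensionality; intro).
unfold dX, deform. apply is_derive_unique. auto_derive; [auto | ring].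
Qed.

Lemma dT_deform tau (f q : R -> R -> R) :
  (forall x t, ex_derive (fun s => f x s) t) -> (forall x t, ex_derive (fun s => q x s) t) ->
  dT (deform tau f q) = deform tau (dT f) (dT q).
Proof.
intros Hf Hq. do 2 (apply functional_extensionality; intro).
unfold dT, deform. apply is_derive_unique. auto_derive; [auto | ring].
Qed.

Lemma Rabs_exp_taylor1_le y : Rabs y <= 1 / 2 -> Rabs (exp y - 1 - y) <= 2 * y ^ 2.
Proof.
intros Hy. apply Rabs_le_between in Hy.
assert (Hlow := exp_ineq1_le y). assert (Hlow' := exp_ineq1_le (- y)).
assert (Hinv : exp y * exp (- y) = 1) by (rewrite <- exp_plus, Rplus_opp_r; apply exp_0).
assert (Hpos := exp_pos y).
assert (Hup : exp y * (1 - y) <= 1) by nra.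
rewrite Rabs_pos_eq by lra. nra.
Qed.

Definition is_O_sq (r : R -> R) : Prop :=
  exists C eta : R, 0 < eta /\ forall tau, Rabs tau < eta -> Rabs (r tau) <= C * tau ^ 2.

Lemma is_O_sq_ext (r1 r2 : R -> R) :
  (forall tau, r1 tau = r2 tau) -> is_O_sq r2 -> is_O_sq r1.
Proof.
intros Hr [C [eta [Heta Hb]]]. exists C, eta. split; [exact Heta|].
intros tau Htau. rewrite Hr. exact (Hb tau Htau).
Qed.

Lemma is_O_sq_plus (r1 r2 : R -> R) :
  is_O_sq r1 -> is_O_sq r2 -> is_O_sq (fun tau => r1 tau + r2 tau).
Proof.
intros [C1 [eta1 [Heta1 Hb1]]] [C2 [eta2 [Heta2 Hb2]]].
exists (C1 + C2), (Rmin eta1 eta2). split; [now apply Rmin_glb_lt|].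
intros tau Htau.
assert (H1 := Hb1 tau (Rlt_le_trans _ _ _ Htau (Rmin_l _ _))).
assert (H2 := Hb2 tau (Rlt_le_trans _ _ _ Htau (Rmin_r _ _))).
eapply Rle_trans; [apply Rabs_triang | lra].
Qed.

Lemma is_O_sq_sq_mul_affine a b : is_O_sq (fun tau => tau ^ 2 * (a + tau * b)).
Proof.
exists (Rabs a + Rabs b), 1. split; [lra|]. intros tau Htau.
assert (Hsq := pow2_ge_0 tau). assert (Hb := Rabs_pos b).
rewrite Rabs_mult, (Rabs_pos_eq (tau ^ 2)) by exact Hsq.
assert (Haff : Rabs (a + tau * b) <= Rabs a + Rabs b).
{ eapply Rle_trans; [apply Rabs_triang|]. rewrite Rabs_mult.
  assert (Rabs tau * Rabs b <= Rabs b) by nra. lra. }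
nra.
Qed.

Lemma is_O_sq_mul_quadratic l0 l1 l2 (r : R -> R) :
  is_O_sq r -> is_O_sq (fun tau => (l0 + tau * l1 + tau ^ 2 * l2) * r tau).
Proof.
intros [C [eta [Heta Hb]]].
exists ((Rabs l0 + Rabs l1 + Rabs l2) * C), (Rmin eta 1).
split; [now apply Rmin_glb_lt; lra|]. intros tau Htau.
assert (Hr := Hb tau (Rlt_le_trans _ _ _ Htau (Rmin_l _ _))).
assert (Ht1 : Rabs tau <= 1) by (pose proof (Rmin_r eta 1); lra).
assert (Ht0 := Rabs_pos tau).
assert (HL : Rabs (l0 + tau * l1 + tau ^ 2 * l2) <= Rabs l0 + Rabs l1 + Rabs l2).
{ eapply Rle_trans; [apply Rabs_triang|]. rewrite !Rabs_mult.
  eapply Rle_trans; [apply Rplus_le_compat_r, Rabs_triang|]. rewrite Rabs_mult, <- RPow_abs.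
  assert (H1 := Rabs_pos l1). assert (H2 := Rabs_pos l2).
  assert (Rabs tau * Rabs l1 <= Rabs l1) by nra.
  assert (Rabs tau ^ 2 <= 1) by nra.
  assert (Rabs tau ^ 2 * Rabs l2 <= Rabs l2) by nra. lra. }
rewrite Rabs_mult, Rmult_assoc. apply Rmult_le_compat; auto using Rabs_pos.
Qed.

Lemma is_O_sq_exp k : is_O_sq (fun tau => exp (tau * k) - 1 - tau * k).
Proof.
exists (2 * k ^ 2), (/ (2 * (Rabs k + 1))).
assert (Hk := Rabs_pos k). split; [apply Rinv_0_lt_compat; lra|].
intros tau Htau.
assert (Hsmall : Rabs tau * (2 * (Rabs k + 1)) < 1).
{ apply (Rmult_lt_compat_r (2 * (Rabs k + 1))) in Htau; [|lra].
  rewrite Rinv_l in Htau; lra. }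
assert (Ht0 := Rabs_pos tau).
replace (2 * k ^ 2 * tau ^ 2) with (2 * (tau * k) ^ 2) by ring.
apply Rabs_exp_taylor1_le. rewrite Rabs_mult. nra.
Qed.

Lemma is_O_sq_exp_residual (A L : R -> R) k l0 l1 l2 c2 c3 :
  (forall tau, L tau = l0 + tau * l1 + tau ^ 2 * l2) ->
  (forall tau, A tau - L tau * (1 + tau * k) = tau ^ 2 * (c2 + tau * c3)) ->
  is_O_sq (fun tau => A tau - L tau * exp (tau * k)).
Proof.
intros HL HA.
apply (is_O_sq_ext _ (fun tau => tau ^ 2 * (c2 + tau * c3)
  + (- l0 + tau * - l1 + tau ^ 2 * - l2) * (exp (tau * k) - 1 - tau * k))).
- intro tau. rewrite <- HA, HL. ring.
- apply is_O_sq_plus; [apply is_O_sq_sq_mul_affine|].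
  apply is_O_sq_mul_quadratic, is_O_sq_exp.
Qed.

Lemma is_O_sq_of_quadratic_scaling (r : R -> R) :
  (forall tau, r tau = tau ^ 2 * r 1) -> is_O_sq r.
Proof.
intros Hr. apply (is_O_sq_ext _ (fun tau => tau ^ 2 * (r 1 + tau * 0))).
- intro tau. rewrite Hr. ring.
- apply is_O_sq_sq_mul_affine.
Qed.

Ltac partial_word f := lazymatch f with
  | dX ?h => let w := partial_word h in constr:(true :: w)
  | dT ?h => let w := partial_word h in constr:(false :: w)
  | _ => constr:(@nil bool)
  end.

Ltac partial_base f := lazymatch f with
  | dX ?h => partial_base h
  | dT ?h => partial_base h
  | _ => f
  end.

Ltac ex_partial := lazymatch goal with
  | |- ex_derive (fun y => ?f y ?t) ?x =>
      let w := partial_word f in let f0 := partial_base f in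
      match goal with Hf : smooth2 f0 |- _ => exact (smooth2_ex_derive_X f0 w x t Hf) end
  | |- ex_derive (fun s => ?f ?x s) ?t =>
      let w := partial_word f in let f0 := partial_base f in
      match goal with Hf : smooth2 f0 |- _ => exact (smooth2_ex_derive_T f0 w x t Hf) end
  end.

Ltac fold_partials := repeat match goal with
  | |- context [Derive (fun y => ?f y ?t) ?x] => change (Derive (fun y => f y t) x) with (dX f x t)
  | |- context [Derive (fun s => ?f ?x s) ?t] => change (Derive (fun s => f x s) t) with (dT f x t)
  end.

Ltac derive_by_partials := apply is_derive_unique; auto_derive;
  [repeat split; ex_partial | fold_partials; unfold Rdiv].

Section Symmetry.
Variables nu eps zeta : R.
Variables U m g d b : R -> R -> R.
Hypothesis Hnu : 0 <= nu.
Hypothesis HK : Kc nu zeta <> 0.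
Hypothesis HU : smooth2 U.
Hypothesis Hm : smooth2 m.
Hypothesis Hg : smooth2 g.
Hypothesis Hd : smooth2 d.
Hypothesis Hb : smooth2 b.
Hypothesis Hsol : is_solution nu eps zeta U m g d b.

Notation K := (Kc nu zeta).
Notation E := (Ef nu zeta d).
Notation qU := (QU nu zeta U m g d b).
Notation qm := (Qm nu eps zeta U m g d b).
Notation qg := (Qg nu eps zeta U m g d b).
Notation qb := (Qb nu eps zeta U m g d b).

Lemma sol_m x t : m x t = nu ^ 2 * dX (dX U) x t - eps * U x t.
Proof. generalize (Hsol Em x t); simpl; lra. Qed.

Lemma sol_mT x t : dT m x t = - dX m x t * U x t - 2 * m x t * dX U x t
  + 2 / 3 * (1 - nu52 nu) * dX (dX (dX U)) x t.
Proof. generalize (Hsol EmT x t); simpl; lra. Qed.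

Lemma sol_gX x t : dX g x t = - (3 / (4 * K)) * g x t ^ 2 + m x t + 1 / 3 * eps * sc nu zeta.
Proof. generalize (Hsol EgX x t); simpl; lra. Qed.

Lemma sol_gT x t : dT g x t = 2 / 3 * K * dX (dX U) x t - 2 / 3 * sc nu zeta * dX g x t
  - (dX g x t * U x t + g x t * dX U x t).
Proof.
assert (Hflux : dX (fun y r => 2 / 3 * K * dX U y r - 2 / 3 * sc nu zeta * g y r - g y r * U y r) x t
  = 2 / 3 * K * dX (dX U) x t - 2 / 3 * sc nu zeta * dX g x t
    - (dX g x t * U x t + g x t * dX U x t)).
{ unfold dX at 1. derive_by_partials. ring. }
generalize (Hsol EgT x t); simpl; lra.
Qed.

Lemma sol_dX x t : dX d x t = g x t.
Proof. generalize (Hsol EdX x t); simpl; lra. Qed.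

Lemma sol_dT x t : dT d x t = 2 / 3 * K * dX U x t - 2 / 3 * sc nu zeta * g x t - U x t * g x t.
Proof. generalize (Hsol EdT x t); simpl; lra. Qed.

Lemma sol_bX x t : dX b x t = (nu ^ 2 * m x t + 1 / 3 * eps * (nu52 nu - 1)) * E x t.
Proof. generalize (Hsol EbX x t); simpl; lra. Qed.

Lemma sol_bT x t : dT b x t =
  (- 1 / 3 * (nu52 nu - 1) * (2 * m x t + eps * U x t) - 1 / 2 * g x t ^ 2
   + 2 / 9 * eps * (2 * zeta + zeta ^ 2 * nu ^ 2 - nu ^ 3 + 2 * sqrt nu)
   - nu ^ 2 * U x t * m x t) * E x t.
Proof. generalize (Hsol EbT x t); simpl; lra. Qed.

Lemma sol_mX x t : dX m x t = nu ^ 2 * dX (dX (dX U)) x t - eps * dX U x t.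
Proof. erewrite dX_ext by (intro; apply sol_m). derive_by_partials. ring. Qed.

Lemma sol_mXX x t : dX (dX m) x t = nu ^ 2 * dX (dX (dX (dX U))) x t - eps * dX (dX U) x t.
Proof. erewrite dX_ext by (intro; apply sol_mX). derive_by_partials. ring. Qed.

Lemma sol_mXT x t : dT (dX m) x t = - (dX (dX m) x t * U x t + dX m x t * dX U x t)
  - 2 * (dX m x t * dX U x t + m x t * dX (dX U) x t)
  + 2 / 3 * (1 - nu52 nu) * dX (dX (dX (dX U))) x t.
Proof.
rewrite <- smooth2_dXdT by exact Hm. erewrite dX_ext by (intro; apply sol_mT).
derive_by_partials. ring.
Qed.

Lemma dX_QU x t : dX qU x t = (3 / (4 * K) * g x t ^ 2 + m x t + 1 / 3 * eps * sc nu zeta) * E x t.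
Proof.
unfold QU at 1, Ef, dX at 1. derive_by_partials.
rewrite sol_gX, sol_dX. field. exact HK.
Qed.

Lemma dXX_QU x t : dX (dX qU) x t =
  (3 / K * g x t * m x t + 3 / K * (1 / 3 * eps * sc nu zeta) * g x t + dX m x t) * E x t.
Proof.
erewrite dX_ext by (intro; apply dX_QU). unfold Ef. derive_by_partials.
rewrite sol_gX, sol_dX. field. exact HK.
Qed.

Lemma dXXX_QU x t : dX (dX (dX qU)) x t =
  (3 / K * (m x t + 1 / 3 * eps * sc nu zeta) * (3 / (4 * K) * g x t ^ 2 + m x t + 1 / 3 * eps * sc nu zeta)
   + 9 / (2 * K) * g x t * dX m x t + dX (dX m) x t) * E x t.
Proof.
erewrite dX_ext by (intro; apply dXX_QU). unfold Ef. derive_by_partials.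
rewrite sol_gX, sol_dX. field. exact HK.
Qed.

Lemma dX_Qm x t : dX qm x t =
  (nu ^ 2 * dX (dX m) x t + 3 * nu ^ 2 / K * (dX g x t * m x t + g x t * dX m x t)
   + dX g x t * eps * (nu52 nu - 1) / K) * E x t + qm x t * (3 / (2 * K) * g x t).
Proof.
unfold Qm, Ef, dX at 1. derive_by_partials.
rewrite sol_dX. field. exact HK.
Qed.

Lemma dT_Qm x t : dT qm x t =
  (nu ^ 2 * dT (dX m) x t + 3 * nu ^ 2 / K * (dT g x t * m x t + g x t * dT m x t)
   + dT g x t * eps * (nu52 nu - 1) / K) * E x t + qm x t * (3 / (2 * K) * dT d x t).
Proof. unfold Qm, Ef, dT at 1. derive_by_partials. field. exact HK. Qed.

Lemma dX_Qg x t : dX qg x t = nu ^ 2 * dX m x t * E x t + qg x t * (3 / (2 * K) * g x t).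
Proof.
unfold Qg, Ef, dX at 1. derive_by_partials.
rewrite sol_dX. field. exact HK.
Qed.

Lemma dT_Qg x t : dT qg x t = nu ^ 2 * dT m x t * E x t + qg x t * (3 / (2 * K) * dT d x t).
Proof. unfold Qg, Ef, dT at 1. derive_by_partials. field. exact HK. Qed.

Lemma dX_Qb x t : dX qb x t =
  nu ^ 2 * nu ^ 2 * dX m x t * E x t ^ 2
  + nu ^ 2 * (nu ^ 2 * m x t + 1 / 3 * eps * (nu52 nu - 1)) * (3 / K * g x t) * E x t ^ 2
  + 3 / (2 * K) * b x t * dX b x t.
Proof.
unfold Qb, Ef, dX at 1. derive_by_partials.
rewrite sol_dX. field. exact HK.
Qed.

Lemma dT_Qb x t : dT qb x t =
  nu ^ 2 * nu ^ 2 * dT m x t * E x t ^ 2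
  + nu ^ 2 * (nu ^ 2 * m x t + 1 / 3 * eps * (nu52 nu - 1)) * (3 / K * dT d x t) * E x t ^ 2
  + 3 / (2 * K) * b x t * dT b x t.
Proof. unfold Qb, Ef, dT at 1. derive_by_partials. field. exact HK. Qed.

Lemma ex_derive_QU_X x t : ex_derive (fun y => qU y t) x.
Proof. unfold QU, Ef. auto_derive. repeat split; ex_partial. Qed.

Lemma ex_derive_dX_QU_X x t : ex_derive (fun y => dX qU y t) x.
Proof.
eapply ex_derive_ext; [intro; symmetry; apply dX_QU|].
unfold Ef. auto_derive. repeat split; ex_partial.
Qed.

Lemma ex_derive_dXX_QU_X x t : ex_derive (fun y => dX (dX qU) y t) x.
Proof.
eapply ex_derive_ext; [intro; symmetry; apply dXX_QU|].
unfold Ef. auto_derive. repeat split; ex_partial.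
Qed.

Lemma ex_derive_Qm_X x t : ex_derive (fun y => qm y t) x.
Proof. unfold Qm, Ef. auto_derive. repeat split; ex_partial. Qed.

Lemma ex_derive_Qm_T x t : ex_derive (fun r => qm x r) t.
Proof. unfold Qm, Ef. auto_derive. repeat split; ex_partial. Qed.

Lemma ex_derive_Qg_X x t : ex_derive (fun y => qg y t) x.
Proof. unfold Qg, Ef. auto_derive. repeat split; ex_partial. Qed.

Lemma ex_derive_Qg_T x t : ex_derive (fun r => qg x r) t.
Proof. unfold Qg, Ef. auto_derive. repeat split; ex_partial. Qed.

Lemma ex_derive_Qb_X x t : ex_derive (fun y => qb y t) x.
Proof. unfold Qb, Ef. auto_derive. repeat split; ex_partial. Qed.

Lemma ex_derive_Qb_T x t : ex_derive (fun r => qb x r) t.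
Proof. unfold Qb, Ef. auto_derive. repeat split; ex_partial. Qed.

Ltac ex_derive_deformed := intros; unfold Qd; lazymatch goal with
  | |- ex_derive (fun y => QU _ _ _ _ _ _ _ y _) _ => apply ex_derive_QU_X
  | |- ex_derive (fun y => dX (QU _ _ _ _ _ _ _) y _) _ => apply ex_derive_dX_QU_X
  | |- ex_derive (fun y => dX (dX (QU _ _ _ _ _ _ _)) y _) _ => apply ex_derive_dXX_QU_X
  | |- ex_derive (fun y => Qm _ _ _ _ _ _ _ _ y _) _ => apply ex_derive_Qm_X
  | |- ex_derive (fun r => Qm _ _ _ _ _ _ _ _ _ r) _ => apply ex_derive_Qm_T
  | |- ex_derive (fun y => Qg _ _ _ _ _ _ _ _ y _) _ => apply ex_derive_Qg_X
  | |- ex_derive (fun r => Qg _ _ _ _ _ _ _ _ _ r) _ => apply ex_derive_Qg_T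
  | |- ex_derive (fun y => Qb _ _ _ _ _ _ _ _ y _) _ => apply ex_derive_Qb_X
  | |- ex_derive (fun r => Qb _ _ _ _ _ _ _ _ _ r) _ => apply ex_derive_Qb_T
  | _ => ex_partial
  end.

Ltac expand_deformed_partials := cbv beta iota delta [residual];
  repeat rewrite dX_deform by ex_derive_deformed;
  repeat rewrite dT_deform by ex_derive_deformed.

(* The identities use [sqrt nu ^ 2 = nu], hence [nu] is replaced by [sn * sn]. *)
Ltac close_by_solution :=
  rewrite ?dXXX_QU, ?dXX_QU, ?dX_QU, ?dT_Qm, ?dX_Qm, ?dT_Qg, ?dX_Qg, ?dT_Qb, ?dX_Qb;
  cbv beta delta [QU Qm Qg Qd Qb];
  rewrite ?sol_mXT, ?sol_mT, ?sol_gT, ?sol_dT, ?sol_bT, ?sol_bX, ?sol_mXX, ?sol_gX,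
    ?sol_mX, ?sol_dX, ?sol_m;
  let HK' := fresh in assert (HK' := HK);
  unfold Kc, sc, nu52 in *;
  let Hsq := fresh in assert (Hsq := sqrt_sqrt nu Hnu);
  let sn := fresh "sn" in set (sn := sqrt nu) in *; clearbody sn;
  rewrite <- Hsq in *;
  field; auto.

Notation res e tau := (residual nu eps zeta e (deform tau U qU) (deform tau m qm)
  (deform tau g qg) (deform tau d (Qd U m g d b)) (deform tau b qb)).

Lemma dX_deformed_flux tau x t :
  dX (fun y r => 2 / 3 * K * deform tau (dX U) (dX qU) y r
     - 2 / 3 * sc nu zeta * deform tau g qg y r - deform tau g qg y r * deform tau U qU y r) x t
  = 2 / 3 * K * (dX (dX U) x t + tau * dX (dX qU) x t)
    - 2 / 3 * sc nu zeta * (dX g x t + tau * dX qg x t)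
    - ((dX g x t + tau * dX qg x t) * (U x t + tau * qU x t)
       + (g x t + tau * qg x t) * (dX U x t + tau * dX qU x t)).
Proof.
unfold dX at 1, deform. apply is_derive_unique. auto_derive.
- repeat split; ex_derive_deformed.
- fold_partials. ring.
Qed.

Lemma residual_deform_quadratic e tau x t : e <> EbX -> e <> EbT ->
  res e tau x t = tau ^ 2 * res e 1 x t.
Proof.
intros HbX HbT. destruct e; try congruence;
  expand_deformed_partials; rewrite ?dX_deformed_flux; unfold deform; close_by_solution.
Qed.

Lemma Ef_deform tau x t :
  Ef nu zeta (deform tau d (Qd U m g d b)) x t = E x t * exp (tau * (3 * b x t / (2 * K))).
Proof. unfold Ef, deform, Qd. rewrite <- exp_plus. f_equal. field. exact HK. Qed.

(* [L] is quadratic and [A - L (1 + tau k)] is a cubic in [tau] without constant and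
   linear term, so their coefficients are recovered by interpolation at [-1, 0, 1]. *)
Ltac is_O_sq_exp_by A L k :=
  let P := constr:(fun tau => A tau - L tau * (1 + tau * k)) in
  apply (is_O_sq_ext _ (fun tau => A tau - L tau * exp (tau * k)));
  [ intro; expand_deformed_partials; rewrite Ef_deform; unfold deform; ring
  | apply (is_O_sq_exp_residual A L k (L 0) ((L 1 - L (-1)) / 2) ((L 1 + L (-1)) / 2 - L 0)
             ((P 1 + P (-1)) / 2) ((P 1 - P (-1)) / 2));
    intro tau; cbv beta; [field | close_by_solution] ].

Lemma residual_deform_bX_is_O_sq x t : is_O_sq (fun tau => res EbX tau x t).
Proof.
is_O_sq_exp_by (fun tau => dX b x t + tau * dX qb x t)
  (fun tau => (nu ^ 2 * (m x t + tau * qm x t) + 1 / 3 * eps * (nu52 nu - 1)) * E x t)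
  (3 * b x t / (2 * K)).
Qed.

Lemma residual_deform_bT_is_O_sq x t : is_O_sq (fun tau => res EbT tau x t).
Proof.
is_O_sq_exp_by (fun tau => dT b x t + tau * dT qb x t)
  (fun tau => (- 1 / 3 * (nu52 nu - 1) * (2 * (m x t + tau * qm x t) + eps * (U x t + tau * qU x t))
     - 1 / 2 * (g x t + tau * qg x t) ^ 2
     + 2 / 9 * eps * (2 * zeta + zeta ^ 2 * nu ^ 2 - nu ^ 3 + 2 * sqrt nu)
     - nu ^ 2 * (U x t + tau * qU x t) * (m x t + tau * qm x t)) * E x t)
  (3 * b x t / (2 * K)).
Qed.

Lemma residual_deform_is_O_sq e x t : is_O_sq (fun tau => res e tau x t).
Proof.
destruct e; try apply residual_deform_bX_is_O_sq; try apply residual_deform_bT_is_O_sq;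
  apply is_O_sq_of_quadratic_scaling; intro; apply residual_deform_quadratic; discriminate.
Qed.
End Symmetry.

Theorem theorem6 (nu eps zeta : R) (U m g d b : R -> R -> R) :
  0 <= nu ->
  (eps = 0 \/ eps = 1) ->
  Kc nu zeta <> 0 ->
  smooth2 U -> smooth2 m -> smooth2 g -> smooth2 d -> smooth2 b ->
  is_solution nu eps zeta U m g d b ->
  forall (e : eqn) (x t : R),
    exists C eta : R, 0 < eta /\
      forall tau : R, Rabs tau < eta ->
        Rabs (residual nu eps zeta e
                (deform tau U (QU nu zeta U m g d b))
                (deform tau m (Qm nu eps zeta U m g d b))
                (deform tau g (Qg nu eps zeta U m g d b))
                (deform tau d (Qd U m g d b))
                (deform tau b (Qb nu eps zeta U m g d b)) x t)
        <= C * tau ^ 2.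
Proof.
(* The symmetry holds for every real [eps]. *)
intros Hnu _ HK HU Hm Hg Hd Hb Hsol e x t.
exact (residual_deform_is_O_sq nu eps zeta U m g d b Hnu HK HU Hm Hg Hd Hb Hsol e x t).
Qed.
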